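(* Let $f:\mathbb{R}^n\to\mathbb{R}\cup\{+\infty\}$ be a polyhedral M-convex function with bounded $\operatorname{dom}_{\mathbb{R}} f$, and $x\in\operatorname{dom}_{\mathbb{R}} f$ with $\phi_{\mathbb{R}}(x)<0$. Consider the procedure PM-IncSlope$(x)$: set $y:=x$; for each $i\in N$ (each exactly once, arbitrary order) and, for this $i$, for each $j\in N\setminus\{i\}$ (each exactly once, arbitrary order), if $f'_{\mathbb{R}}(y;i,j)=\phi_{\mathbb{R}}(x)$ then replace $y$ by $y+\bar c_{\mathbb{R}}(y;i,j)(\chi_i-\chi_j)$; finally output $x':=y$. Then $\phi_{\mathbb{R}}(x')>\phi_{\mathbb{R}}(x)$.
   Context: $N=\{1,\dots,n\}$; $\chi_i$ is the $i$-th unit vector. $\operatorname{dom}_{\mathbb{R}} f=\{x\in\mathbb{R}^n:f(x)<+\infty\}$. A polyhedral convex function $f:\mathbb{R}^n\to\mathbb{R}\cup\{+\infty\}$ (epigraph a polyhedron, $\operatorname{dom}_{\mathbb{R}} f\neq\emptyset$) is M-convex if for all $x,y\in\operatorname{dom}_{\mathbb{R}} f$ and every $i$ with $x(i)>y(i)$ there exist $j$ with $x(j)<y(j)$ and $\epsilon_0>0$ such that $f(x)+f(y)\ge f(x-\epsilon(\chi_i-\chi_j))+f(y+\epsilon(\chi_i-\chi_j))$ for all $\epsilon\in[0,\epsilon_0]$. For $x\in\operatorname{dom}_{\mathbb{R}} f$, $f'_{\mathbb{R}}(x;i,j)=\lim_{\alpha\downarrow0}(f(x+\alpha(\chi_i-\chi_j))-f(x))/\alpha$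 (possibly $+\infty$), $\phi_{\mathbb{R}}(x)=\min_{i,j\in N}f'_{\mathbb{R}}(x;i,j)$, and for finite $f'_{\mathbb{R}}(x;i,j)$, $\bar c_{\mathbb{R}}(x;i,j)=\max\{\lambda\ge0: f(x+\lambda(\chi_i-\chi_j))-f(x)=\lambda f'_{\mathbb{R}}(x;i,j)\}$. *)

From HB Require Import structures.
From mathcomp Require Import all_boot all_order all_algebra all_fingroup.
From mathcomp Require Import all_classical all_reals all_analysis.
Set Implicit Arguments. Unset Strict Implicit. Unset Printing Implicit Defensive.
Import Order.TTheory GRing.Theory Num.Theory.
Local Open Scope ring_scope.
Local Open Scope classical_set_scope.
Local Open Scope ereal_scope.

Section Defs.
Variables (R : realType) (n : nat).
Notation vec := 'rV[R]_n.

Definition chi (i : 'I_n) : vec := delta_mx ord0 i.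
Definition dir (i j : 'I_n) : vec := (chi i - chi j)%R.

Definition domR (f : vec -> \bar R) : set vec := [set x | f x < +oo].

Definition polyhedral_convex (f : vec -> \bar R) : Prop :=
  (forall x, f x != -oo) /\ (exists x, f x < +oo) /\
  exists (m : nat) (A : 'I_m -> vec) (b c : 'I_m -> R),
    forall (x : vec) (t : R),
      (f x <= t%:E) <-> (forall k, \sum_(i < n) (A k) ord0 i * x ord0 i + b k * t <= c k)%R.

Definition M_convex (f : vec -> \bar R) : Prop :=
  polyhedral_convex f /\
  forall x y, domR f x -> domR f y ->
  forall i, (y ord0 i < x ord0 i)%R ->
  exists j, (x ord0 j < y ord0 j)%R /\
  exists eps0 : R, (0 < eps0)%R /\
    forall eps : R, (0 <= eps <= eps0)%R ->
      f (x - eps *: dir i j)%R + f (y + eps *: dir i j)%R <= f x + f y.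

Definition diffq (f : vec -> \bar R) (x : vec) (i j : 'I_n) (a : R) : \bar R :=
  (f (x + a *: dir i j)%R - f x) * (a^-1)%:E.

Definition fder (f : vec -> \bar R) (x : vec) (i j : 'I_n) : \bar R :=
  lim (diffq f x i j @ (0:R)^'+).

Definition phiR (f : vec -> \bar R) (x : vec) : \bar R :=
  \big[mine/+oo]_(i < n) \big[mine/+oo]_(j < n) fder f x i j.

(* c_R(x; i, j) = max { lambda >= 0 | f(x + lambda (chi_i - chi_j)) - f(x)
                                       = lambda * f'_R(x; i, j) }
   (used only when f'_R(x;i,j) is finite; the max exists for bounded dom f,
    and is expressed here as the supremum of this set) *)
Definition cbar (f : vec -> \bar R) (x : vec) (i j : 'I_n) : R :=
  sup [set lam : R | (0 <= lam)%R /\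
        f (x + lam *: dir i j)%R - f x = (lam * fine (fder f x i j))%:E].

Definition inc_step (f : vec -> \bar R) (phi0 : \bar R) (y : vec) (i j : 'I_n)
  : vec :=
  if (j != i) && (fder f y i j == phi0) then (y + cbar f y i j *: dir i j)%R else y.

(* PM-IncSlope(x): outer loop over i in the order sigma, and for each i an inner
   loop over j in the order tau i (j = i is skipped, i.e. j ranges over N \ {i}). *)
Definition PM_IncSlope (f : vec -> \bar R) (sigma : {perm 'I_n})
  (tau : 'I_n -> {perm 'I_n}) (x : vec) : vec :=
  foldl (fun y k =>
           let i := sigma k in
           foldl (fun z l => inc_step f (phiR f x) z i (tau i l)) y (enum 'I_n))
        x (enum 'I_n).

End Defs.

(* Write p := phi(x) < 0.  The invariant of the procedure is that every
   directional derivative at the current point y is at least p.  Since dom f is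
   compact and f is M-convex, this local bound integrates to the cone bound
   f z >= f y + (p/2) |z - y|_1.  A step of length cbar along a p-arc (i, j)
   stays on this cone, which preserves the invariant, kills the p-arc (i, j),
   and shows that a p-arc (k, l) at the new point comes from a p-arc (k, l) or
   (k, j), k <> i, at the old one.  So once row i has been processed it carries
   no p-arc and never regains one; at the end no arc has slope p. *)

From HB Require Import structures.
From mathcomp Require Import all_boot all_order all_algebra all_fingroup.
From mathcomp Require Import all_classical all_reals all_analysis.
From mathcomp Require Import lra ring.
Set Implicit Arguments. Unset Strict Implicit. Unset Printing Implicit Defensive.
Import Order.TTheory GRing.Theory Num.Theory numFieldNormedType.Exports.
Local Open Scope ring_scope.
Local Open Scope classical_set_scope.
Local Open Scope ereal_scope.

Lemma ex_gt0_lower_bound (R : realType) m (P : pred 'I_m) (a : 'I_m -> R) :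
  (forall k, P k -> 0 < a k)%R ->
  exists2 e : R, (0 < e)%R & forall k, P k -> (e <= a k)%R.
Proof.
move=> a_gt0; exists (\big[Order.min/1%R]_(k | P k) a k).
  by apply: (big_ind (fun x => 0 < x)%R) => //= x y x0 y0; rewrite lt_min x0.
by move=> k Pk; apply: bigmin_le_cond.
Qed.

Lemma lee_subr_of_leD (R : realType) (a1 a2 : \bar R) (C D P : R) :
  a1 != -oo -> a2 != -oo ->
  a1 + a2 <= (C + D)%:E -> (D + P)%:E <= a2 -> a1 <= (C - P)%:E.
Proof.
case: a1 => [x1| |] // _; case: a2 => [x2| |] // _.
- by rewrite -EFinD !lee_fin; lra.
all: by rewrite ?addey ?addye // leNgt ltey.
Qed.

Lemma lim_at_right_eventually (R : realType) (g : R -> \bar R) (L : \bar R) (e : R) :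
  (0 < e)%R -> (forall eta, (0 < eta <= e)%R -> g eta = L) ->
  lim (g @ (0:R)^'+) = L.
Proof.
move=> e0 gL; apply: cvg_lim => //.
have gL_near : {near (0:R)^'+, (fun=> L) =1 g}.
  near=> eta; apply/esym/gL; apply/andP; split.
    by near: eta; apply: nbhs_right_gt.
  by near: eta; apply: nbhs_right_ltW.
exact: cvg_trans (near_eq_cvg gL_near) (cvg_cst _).
Unshelve. all: by end_near.
Qed.

Lemma sube_eq_EFin (R : realType) (a : \bar R) (x r : R) :
  a - x%:E = r%:E <-> a = (x + r)%:E.
Proof.
case: a => [a| |] /=; split => //.
- by case=> h; congr (_%:E); rewrite -h; ring.
- by case=> ->; congr (_%:E); ring.
Qed.

Lemma addrKl (V : zmodType) (y a : V) : (y + a - y = a)%R.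
Proof. by rewrite addrC addKr. Qed.

(** * Polyhedral functions along rays *)

Section Polyhedral.
Variables (R : realType) (n m : nat) (f : 'rV[R]_n -> \bar R).
Variables (A : 'I_m -> 'rV[R]_n) (b c : 'I_m -> R).

Definition lform k (x : 'rV[R]_n) : R := \sum_(i < n) A k ord0 i * x ord0 i.

Lemma lformD k x y : lform k (x + y) = (lform k x + lform k y)%R.
Proof. by rewrite /lform -big_split /=; apply: eq_bigr => i _; rewrite mxE mulrDr. Qed.

Lemma lformZ k (a : R) x : lform k (a *: x) = (a * lform k x)%R.
Proof. by rewrite /lform mulr_sumr; apply: eq_bigr => i _; rewrite mxE mulrCA. Qed.

Hypothesis f_neqNy : forall x, f x != -oo.
Hypothesis f_epi : forall x (t : R),
  f x <= t%:E <-> (forall k, lform k x + b k * t <= c k)%R.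

Lemma f_fin x : f x != +oo -> f x = (fine (f x))%:E.
Proof. by move=> h; rewrite fineK // fin_numE f_neqNy h. Qed.

Lemma f_dom_fin x : domR f x -> f x = (fine (f x))%:E.
Proof. by move=> h; apply: f_fin; rewrite lt_eqF. Qed.

(* The epigraph is closed, so an affine upper bound along a ray survives at the supremum. *)
Lemma f_le_line_sup y e (g0 p : R) (C : set R) : C 0%R -> has_ubound C ->
  (forall l, C l -> f (y + l *: e) <= (g0 + l * p)%:E) ->
  f (y + sup C *: e) <= (g0 + sup C * p)%:E.
Proof.
move=> C0 Cub fC; apply/f_epi => k.
have Cle l : C l -> (lform k y + b k * g0 + (lform k e + b k * p) * l <= c k)%R.
  by move=> /fC /f_epi /(_ k); rewrite lformD lformZ; lra.
have Csup : has_sup C by split=> //; exists 0%R.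
have sup_ge0 : (0 <= sup C)%R by apply: (ub_le_sup Cub).
rewrite lformD lformZ.
have [slope_le0|slope_gt0] := leP (lform k e + b k * p)%R 0%R.
  by have := Cle _ C0; have := mulr_le0_ge0 slope_le0 sup_ge0; lra.
rewrite leNgt; apply/negP => sup_viol.
pose eps := ((lform k y + lform k e * sup C + b k * (g0 + sup C * p) - c k)
             / (lform k e + b k * p))%R.
have eps_gt0 : (0 < eps)%R by apply: divr_gt0 => //; lra.
have [l Cl lt_l] := sup_adherent eps_gt0 Csup.
have := Cle _ Cl.
have : ((lform k e + b k * p) * (sup C - eps) < (lform k e + b k * p) * l)%R.
  by rewrite ltr_pM2l.
by rewrite mulrBr /eps mulrCA mulfV ?gt_eqF // mulr1; lra.
Qed.

Section Ray.
Variables (y u : 'rV[R]_n) (g0 : R).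
Hypothesis fy : f y = g0%:E.

Let slack k := (c k - lform k y - b k * g0)%R.

Lemma slack_ge0 k : (0 <= slack k)%R.
Proof.
have /(f_epi y g0) epi_y : f y <= g0%:E by rewrite fy.
by have := epi_y k; rewrite /slack; lra.
Qed.

Lemma f_ray_le eta t : f (y + eta *: u) <= t%:E <->
  (forall k, 0 <= slack k - eta * lform k u - b k * (t - g0))%R.
Proof. by rewrite f_epi; split=> h k; move: (h k); rewrite lformD lformZ /slack; lra. Qed.

Lemma epi_coef_le0 k : (b k <= 0)%R.
Proof.
rewrite leNgt; apply/negP => bk_gt0.
have /(f_ray_le 0) /(_ k) : f (y + 0 *: u) <= (g0 + slack k / b k + 1)%:E.
  rewrite scale0r addr0 fy lee_fin.
  have : (0 <= slack k / b k)%R by rewrite divr_ge0 ?slack_ge0 ?ltW.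
  lra.
rewrite mul0r subr0 (_ : g0 + slack k / b k + 1 - g0 = slack k / b k + 1)%R; last by lra.
by rewrite mulrDr mulrC divfK ?gt_eqF //; lra.
Qed.

Lemma ray_pinfty k : slack k = 0%R -> b k = 0%R -> (0 < lform k u)%R ->
  forall eta, (0 < eta)%R -> f (y + eta *: u) = +oo.
Proof.
move=> sk0 bk0 uk_gt0 eta eta_gt0.
have [//|/f_fin fin] := eqVneq (f (y + eta *: u)) +oo.
have : f (y + eta *: u) <= (fine (f (y + eta *: u)))%:E by rewrite {1}fin.
move=> /f_ray_le /(_ k); rewrite sk0 bk0 mul0r subr0 sub0r oppr_ge0.
by rewrite leNgt (mulr_gt0 eta_gt0 uk_gt0).
Qed.

(* Otherwise all constraints would still hold at (y, g0 - th) for some th > 0. *)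
Lemma exists_tight_nonvertical : exists k, slack k = 0%R /\ (b k < 0)%R.
Proof.
apply: contrapT => no_tight.
have ratio_gt0 k : (b k < 0)%R -> (0 < slack k / - b k)%R.
  move=> bk_lt0; rewrite divr_gt0 ?oppr_gt0 // lt_neqAle slack_ge0 andbT eq_sym.
  by apply/eqP => sk0; apply: no_tight; exists k.
have [th th_gt0 th_le] := ex_gt0_lower_bound ratio_gt0.
have : f (y + 0 *: u) <= (g0 - th)%:E.
  apply/f_ray_le => k; rewrite mul0r subr0 (_ : g0 - th - g0 = - th)%R; last by lra.
  have [bk_lt0|bk_ge0] := ltP (b k) 0%R.
    by have := th_le k bk_lt0; rewrite ler_pdivlMr ?oppr_gt0 //; lra.
  have -> : b k = 0%R by apply/eqP; rewrite eq_le epi_coef_le0.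
  by rewrite mul0r subr0 slack_ge0.
by rewrite scale0r addr0 fy lee_fin; lra.
Qed.

(* The slope of f along u is the least s allowed by every tight constraint. *)
Let slopes := [set s : R | forall k, slack k = 0%R -> (lform k u + b k * s <= 0)%R].
Let ratio k := (lform k u / - b k)%R.

Section AffineRay.
Hypothesis no_blocking_vertical : forall k, slack k = 0%R -> b k = 0%R -> (lform k u <= 0)%R.

Lemma slopes_ratio_le s k : slopes s -> slack k = 0%R -> (b k < 0)%R -> (ratio k <= s)%R.
Proof. by move=> /(_ k) + sk0 bk_lt0 => /(_ sk0); rewrite ler_pdivrMr ?oppr_gt0 //; lra. Qed.

Lemma slopesP s : (forall k, slack k = 0%R -> (b k < 0)%R -> (ratio k <= s)%R) -> slopes s.
Proof.
move=> ratio_le k sk0; have [bk_lt0|bk_ge0] := ltP (b k) 0%R.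
  by have := ratio_le k sk0 bk_lt0; rewrite ler_pdivrMr ?oppr_gt0 //; lra.
have bk0 : b k = 0%R by apply/eqP; rewrite eq_le epi_coef_le0.
by rewrite bk0 mul0r addr0 no_blocking_vertical.
Qed.

Lemma slopes_lbound : has_lbound slopes.
Proof.
have [k [sk0 bk_lt0]] := exists_tight_nonvertical.
by exists (ratio k) => s /slopes_ratio_le; apply.
Qed.

Lemma slopes_inf : slopes (inf slopes).
Proof.
have slopes_n0 : slopes !=set0.
  exists (\sum_(l < m) `|ratio l|)%R; apply: slopesP => k _ _.
  apply: le_trans (ler_norm _) _; rewrite (bigD1 k) //= lerDl.
  by apply: sumr_ge0 => l _; exact: normr_ge0.
apply: slopesP => k sk0 bk_lt0; apply: lb_le_inf => // s /slopes_ratio_le; exact.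
Qed.

Lemma ray_ge_affine eta : (0 <= eta)%R -> (g0 + inf slopes * eta)%:E <= f (y + eta *: u).
Proof.
move=> eta_ge0; have [->|eta_neq0] := eqVneq eta 0%R.
  by rewrite mulr0 addr0 scale0r addr0 fy.
have eta_gt0 : (0 < eta)%R by rewrite lt_neqAle eq_sym eta_neq0.
have [->|/f_fin fin] := eqVneq (f (y + eta *: u)) +oo; first exact: leey.
rewrite fin lee_fin; set t := fine _ in fin *.
have : f (y + eta *: u) <= t%:E by rewrite fin.
move=> /f_ray_le ray_t; pose s := ((t - g0) / eta)%R.
have slopes_s : slopes s.
  move=> k sk0; move: (ray_t k); rewrite sk0 (_ : t - g0 = s * eta)%R; last by rewrite divfK.
  move=> h; have : (0 <= - eta * (lform k u + b k * s))%R by move: h; rewrite mulrDr; lra.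
  by rewrite mulNr oppr_ge0 pmulr_rle0.
by have := ge_inf slopes_lbound slopes_s; rewrite /s ler_pdivlMr //; lra.
Qed.

Lemma ray_le_affine : exists2 e : R, (0 < e)%R &
  forall eta, (0 <= eta <= e)%R -> f (y + eta *: u) <= (g0 + inf slopes * eta)%:E.
Proof.
pose w k := (lform k u + b k * inf slopes)%R.
have ratio_gt0 k : ((0 < slack k) && (0 < w k))%R -> (0 < slack k / w k)%R.
  by case/andP => *; apply: divr_gt0.
have [e e_gt0 e_le] := ex_gt0_lower_bound ratio_gt0.
exists e => // eta /andP[eta_ge0 eta_le]; apply/f_ray_le => k.
rewrite (_ : g0 + inf slopes * eta - g0 = inf slopes * eta)%R; last by lra.
rewrite (_ : slack k - eta * lform k u - b k * (inf slopes * eta)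
           = slack k - eta * w k)%R; last by rewrite /w; ring.
have [sk0|sk_neq0] := eqVneq (slack k) 0%R.
  by rewrite sk0 sub0r oppr_ge0 mulr_ge0_le0 // slopes_inf.
have sk_gt0 : (0 < slack k)%R by rewrite lt_neqAle eq_sym sk_neq0 slack_ge0.
have [wk_le0|wk_gt0] := leP (w k) 0%R; first by have := mulr_ge0_le0 eta_ge0 wk_le0; lra.
have := e_le k; rewrite sk_gt0 wk_gt0 => /(_ isT); rewrite ler_pdivlMr // => h.
by have := ler_wpM2r (ltW wk_gt0) eta_le; lra.
Qed.

End AffineRay.

Lemma polyhedral_ray : exists2 e : R, (0 < e)%R &
  ((forall eta, (0 < eta <= e)%R -> f (y + eta *: u) = +oo) \/
   exists d : R, forall eta, (0 <= eta <= e)%R -> f (y + eta *: u) = (g0 + d * eta)%:E).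
Proof.
case: (pselect (exists k, [/\ slack k = 0%R, b k = 0%R & (0 < lform k u)%R])).
  move=> [k [sk0 bk0 uk_gt0]]; exists 1%R => //; left => eta /andP[eta_gt0 _].
  exact: ray_pinfty sk0 bk0 uk_gt0 eta eta_gt0.
move=> no_blocking; have no_blocking_vertical k : slack k = 0%R -> b k = 0%R -> (lform k u <= 0)%R.
  by move=> sk0 bk0; rewrite leNgt; apply/negP => uk_gt0; apply: no_blocking; exists k.
have [e e_gt0 le_aff] := ray_le_affine no_blocking_vertical.
exists e => //; right; exists (inf slopes).
move=> eta /andP[eta_ge0 eta_le]; apply/le_anti; rewrite ray_ge_affine //.
by rewrite le_aff ?eta_ge0.
Qed.

End Ray.

Lemma fder_shape y g0 i j : f y = g0%:E -> exists2 e : R, (0 < e)%R &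
  ((forall eta, (0 < eta <= e)%R -> f (y + eta *: dir R i j) = +oo)
     /\ fder f y i j = +oo) \/
  (exists d : R,
     (forall eta, (0 <= eta <= e)%R -> f (y + eta *: dir R i j) = (g0 + d * eta)%:E)
     /\ fder f y i j = d%:E).
Proof.
move=> fy; have [e e_gt0 [f_inf|[d f_aff]]] := polyhedral_ray (dir R i j) fy.
  exists e => //; left; split => //.
  apply: (lim_at_right_eventually e_gt0) => eta /andP[eta_gt0 eta_le].
  by rewrite /diffq f_inf ?eta_gt0 // fy -EFinN addye // gt0_mulye // lte_fin invr_gt0.
exists e => //; right; exists d; split => //.
apply: (lim_at_right_eventually e_gt0) => eta /andP[eta_gt0 eta_le].
rewrite /diffq f_aff ?(ltW eta_gt0) ?eta_le // fy -EFinB -EFinM; congr (_%:E).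
by field; rewrite gt_eqF.
Qed.

Lemma fder_neqNy y i j : domR f y -> fder f y i j != -oo.
Proof. by move=> /f_dom_fin fy; have [e _ [[_ ->]|[d [_ ->]]]] := fder_shape i j fy. Qed.

Lemma fder_ge_slope y i j (p : R) : domR f y -> p%:E <= fder f y i j ->
  exists2 e : R, (0 < e)%R & forall eta, (0 <= eta <= e)%R ->
    f y + (p * eta)%:E <= f (y + eta *: dir R i j).
Proof.
move=> /f_dom_fin fy le_p.
have [e e_gt0 [[f_inf _]|[d [f_aff fder_d]]]] := fder_shape i j fy.
  exists e => // eta /andP[eta_ge0 eta_le].
  have [->|eta_neq0] := eqVneq eta 0%R; first by rewrite mulr0 addr0 scale0r addr0.
  by rewrite f_inf ?leey // eta_le lt_neqAle eq_sym eta_neq0 eta_ge0.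
exists e => // eta eta_in; rewrite f_aff // fy -EFinD lee_fin lerD2l.
by rewrite fder_d lee_fin in le_p; apply: ler_wpM2r => //; case/andP: eta_in.
Qed.

Lemma fder_fin_affine y i j (p : R) : domR f y -> fder f y i j = p%:E ->
  exists2 e : R, (0 < e)%R & forall eta, (0 <= eta <= e)%R ->
    f (y + eta *: dir R i j) = f y + (p * eta)%:E.
Proof.
move=> /f_dom_fin fy fder_p.
have [e e_gt0 [[_ fder_inf]|[d [f_aff fder_d]]]] := fder_shape i j fy.
  by rewrite fder_inf in fder_p.
exists e => // eta eta_in; rewrite f_aff // fy -EFinD.
by rewrite fder_d in fder_p; case: fder_p => ->.
Qed.

Lemma fder_lt_slope y i j (p : R) : domR f y -> fder f y i j < p%:E ->
  exists2 e : R, (0 < e)%R & f (y + e *: dir R i j) < f y + (p * e)%:E.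
Proof.
move=> /f_dom_fin fy lt_p.
have [e e_gt0 [[_ fder_inf]|[d [f_aff fder_d]]]] := fder_shape i j fy.
  by rewrite fder_inf ltNge leey in lt_p.
exists e => //; rewrite f_aff ?lexx ?(ltW e_gt0) // fy -EFinD lte_fin ltrD2l.
by rewrite fder_d lte_fin in lt_p; rewrite ltr_pM2r.
Qed.

Lemma fder_of_affine y i j (p e : R) : domR f y -> (0 < e)%R ->
  (forall eta, (0 < eta <= e)%R -> f (y + eta *: dir R i j) = f y + (p * eta)%:E) ->
  fder f y i j = p%:E.
Proof.
move=> /f_dom_fin fy e_gt0 f_aff; apply: (lim_at_right_eventually e_gt0).
move=> eta /andP[eta_gt0 eta_le].
rewrite /diffq f_aff ?eta_gt0 ?eta_le // fy -EFinD -EFinM; congr (_%:E).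
by field; rewrite gt_eqF.
Qed.

Lemma fder_diag y i : domR f y -> fder f y i i = 0.
Proof.
move=> y_dom; apply: (fder_of_affine y_dom ltr01) => eta _.
by rewrite /dir subrr scaler0 addr0 mul0r adde0.
Qed.

End Polyhedral.

(** * The l1 norm *)

Section L1Norm.
Variables (R : realType) (n : nat).
Implicit Types (w : 'rV[R]_n) (r s t : 'I_n).

Lemma coordB w1 w2 r : ((w1 - w2) ord0 r = w1 ord0 r - w2 ord0 r)%R.
Proof. by rewrite !mxE. Qed.

Lemma dirNC s t : dir R t s = (- dir R s t)%R.
Proof. by rewrite /dir opprB. Qed.

Definition l1norm w : R := \sum_i `|w ord0 i|.

Lemma l1norm0 : l1norm 0 = 0%R.
Proof. by rewrite /l1norm big1 // => i _; rewrite mxE normr0. Qed.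

Lemma l1normD w1 w2 : (l1norm (w1 + w2) <= l1norm w1 + l1norm w2)%R.
Proof. by rewrite /l1norm -big_split /=; apply: ler_sum => i _; rewrite mxE ler_normD. Qed.

Lemma l1normZ a w : l1norm (a *: w) = (`|a| * l1norm w)%R.
Proof. by rewrite /l1norm mulr_sumr; apply: eq_bigr => i _; rewrite mxE normrM. Qed.

Lemma l1normN w : l1norm (- w) = l1norm w.
Proof. by apply: eq_bigr => i _; rewrite mxE normrN. Qed.

Lemma l1norm_chi s : l1norm (chi R s) = 1%R.
Proof.
rewrite /l1norm (bigD1 s) //= big1 => [|r rs]; rewrite /chi mxE /= ?eqxx ?normr1 ?addr0 //.
by rewrite (negbTE rs) normr0.
Qed.

Lemma l1norm_dirZ a s t : (l1norm (a *: dir R s t) <= 2 * `|a|)%R.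
Proof.
rewrite l1normZ mulrC ler_wpM2r //.
by apply: le_trans (l1normD _ _) _; rewrite l1normN !l1norm_chi.
Qed.

Lemma l1norm_dirZ2 a e s t k l :
  (l1norm (a *: dir R s t + e *: dir R k l) <= 2 * `|a| + 2 * `|e|)%R.
Proof. by apply: le_trans (l1normD _ _) _; apply: lerD; apply: l1norm_dirZ. Qed.

Lemma l1norm_dirZ2_chain a e i j k l : (0 <= e <= a)%R -> (k = j \/ l = i) ->
  (l1norm (a *: dir R i j + e *: dir R k l) <= 2 * a)%R.
Proof.
case/andP=> e_ge0 e_le [->|->].
  rewrite (_ : a *: dir R i j + e *: dir R j l = (a - e) *: dir R i j + e *: dir R i l)%R.
    by apply: le_trans (l1norm_dirZ2 _ _ _ _ _ _) _; rewrite !ger0_norm ?subr_ge0 //; lra.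
  by apply/rowP => r; rewrite !mxE; ring.
rewrite (_ : a *: dir R i j + e *: dir R k i = (a - e) *: dir R i j + e *: dir R k j)%R.
  by apply: le_trans (l1norm_dirZ2 _ _ _ _ _ _) _; rewrite !ger0_norm ?subr_ge0 //; lra.
by apply/rowP => r; rewrite !mxE; ring.
Qed.

Lemma l1norm_sub_dir w s t eta : s != t -> (0 <= eta)%R -> (eta <= w ord0 s)%R ->
  (w ord0 t <= - eta)%R -> l1norm (w - eta *: dir R s t) = (l1norm w - 2 * eta)%R.
Proof.
move=> st eta_ge0 eta_le ws_le.
rewrite /l1norm (bigD1 s) //= (bigD1 t) 1?eq_sym //= [in RHS](bigD1 s) //=.
rewrite [in RHS](bigD1 t) 1?eq_sym //=.
rewrite [X in (_ + (_ + X))%R = _](_ : _ = \sum_(i < n | (i != s) && (i != t)) `|w ord0 i|)%R.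
  rewrite !mxE /= eqxx (negbTE st) eq_sym (negbTE st) eqxx /=.
  rewrite (ger0_norm (_ : 0 <= w ord0 s)%R); last by lra.
  rewrite (ler0_norm (_ : w ord0 t <= 0)%R); last by lra.
  rewrite (ger0_norm (_ : 0 <= w ord0 s - eta * (1 - 0))%R); last by lra.
  rewrite (ler0_norm (_ : w ord0 t - eta * (0 - 1) <= 0)%R); last by lra.
  lra.
apply: eq_bigr => r /andP[rs rt]; rewrite !mxE /= (negbTE rs) (negbTE rt).
by rewrite subrr mulr0 subr0.
Qed.

Lemma continuous_coord_sum (g : 'I_n -> R -> R) : (forall i, continuous (g i)) ->
  continuous (fun w : 'rV[R]_n => \sum_i g i (w ord0 i))%R.
Proof.
move=> g_cont; apply: continuous_big; first exact: add_continuous.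
move=> i _ w; apply: continuous_comp; first exact: coord_continuous.
exact: g_cont.
Qed.

Lemma continuous_l1norm_subr y : continuous (fun w => l1norm (w - y)).
Proof.
have -> : (fun w => l1norm (w - y)) = (fun w => \sum_i `|w ord0 i - y ord0 i|)%R.
  by apply/funext => w; apply: eq_bigr => i _; rewrite !mxE.
apply: (continuous_coord_sum (g := fun i x => `|x - y ord0 i|)%R) => i x.
by apply: cvg_norm; apply: cvgB; [exact: cvg_id|exact: cvg_cst].
Qed.

Lemma exists_l1norm_closest y (S : set 'rV[R]_n) : compact S -> S !=set0 ->
  exists2 w, S w & forall v, S v -> (l1norm (w - y) <= l1norm (v - y))%R.
Proof.
move=> S_cpt S_n0.
have l1_cont := continuous_subspaceT (continuous_l1norm_subr (y := y)) (A := S).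
have [w Sw w_min] := EVT_min_rV S_n0 S_cpt l1_cont.
by exists w; [rewrite inE in Sw|move=> v Sv; apply: w_min; rewrite inE].
Qed.

End L1Norm.

(** * The cone bound for M-convex functions *)

Section MConvex.
Variables (R : realType) (n m : nat) (f : 'rV[R]_n -> \bar R).
Variables (A : 'I_m -> 'rV[R]_n) (b c : 'I_m -> R).
Hypothesis f_neqNy : forall x, f x != -oo.
Hypothesis f_epi : forall x (t : R),
  f x <= t%:E <-> (forall k, lform A k x + b k * t <= c k)%R.
Hypothesis f_exchange : forall x y, domR f x -> domR f y ->
  forall i, (y ord0 i < x ord0 i)%R ->
  exists j, (x ord0 j < y ord0 j)%R /\
  exists eps0 : R, (0 < eps0)%R /\
    forall eps : R, (0 <= eps <= eps0)%R ->
      f (x - eps *: dir R i j)%R + f (y + eps *: dir R i j)%R <= f x + f y.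
Variable M : R.
Hypothesis dom_bounded : forall y, domR f y -> forall i, (`|y ord0 i| <= M)%R.

Lemma continuous_lform k : continuous (lform A k).
Proof.
by apply: (continuous_coord_sum (g := fun i x => A k ord0 i * x)%R) => i; exact: mulrl_continuous.
Qed.

Lemma compact_sublevel_l1 y (q a : R) :
  compact [set w | f w <= (q + a * l1norm (w - y))%:E].
Proof.
set S := [set w | _].
have S_closed : closed S.
  pose g k w := (lform A k w + b k * (q + a * l1norm (w - y)))%R.
  have -> : S = \bigcap_(k in setT) (g k @^-1` [set r | r <= c k]%R).
    apply/seteqP; split => w /=; first by move=> /f_epi Sw k _; exact: Sw.
    by move=> Sw; apply/f_epi => k; exact: Sw.
  apply: closed_bigI => k _; apply: preimage_closed; last exact: closed_le.
  move=> w _; rewrite /g; apply: continuousD; first exact: continuous_lform.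
  apply: continuousM; first exact: cst_continuous.
  apply: continuousD; first exact: cst_continuous.
  by apply: continuousM; [exact: cst_continuous|exact: continuous_l1norm_subr].
have S_box : S `<=` [set v : 'rV[R]_n | forall i, `[(- M)%R, M] (v ord0 i)].
  move=> w Sw i /=; have : domR f w by apply: le_lt_trans Sw (ltry _).
  by move=> /dom_bounded /(_ i); rewrite in_itv /= -ler_norml.
apply: subclosed_compact S_closed _ S_box.
by apply: (@rV_compact _ _ (fun=> `[(- M)%R, M]%classic)) => i; exact: segment_compact.
Qed.

Lemma exchange_toward w y : domR f w -> domR f y -> w != y ->
  exists s t, [/\ s != t, (y ord0 s < w ord0 s)%R, (w ord0 t < y ord0 t)%R &
    exists2 e0 : R, (0 < e0)%R & forall eta, (0 <= eta <= e0)%R ->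
      f (w - eta *: dir R s t) + f (y + eta *: dir R s t) <= f w + f y].
Proof.
move=> w_dom y_dom w_neq_y.
have [s ys_lt] : exists s, (y ord0 s < w ord0 s)%R.
  apply: contrapT => no_s.
  have [r wr_neq] : exists r, w ord0 r != y ord0 r.
    apply: contrapT => no_r; move/eqP: w_neq_y; apply; apply/rowP => i.
    apply/eqP; apply: contrapT => h; apply: no_r.
    by exists i; exact/negP.
  have wr_lt : (w ord0 r < y ord0 r)%R.
    by rewrite lt_neqAle wr_neq leNgt; apply/negP => h; apply: no_s; exists r.
  have [j [yj_lt _]] := f_exchange y_dom w_dom wr_lt.
  by apply: no_s; exists j.
have [t [wt_lt [e0 [e0_gt0 exch]]]] := f_exchange w_dom y_dom ys_lt.
exists s, t; split => //; last by exists e0.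
by apply/eqP => st; move: ys_lt wt_lt; rewrite st; lra.
Qed.

Definition fder_ge (p : R) y := forall s t, p%:E <= fder f y s t.

(* Take the l1-closest point to y among those violating the bound by a fixed
   margin: an exchange step from it towards y would violate it further while
   getting closer to y. *)
Lemma fder_ge_global y (p : R) : domR f y -> fder_ge p y ->
  forall z, f y + ((p / 2) * l1norm (z - y))%:E <= f z.
Proof.
move=> y_dom y_ge z; rewrite leNgt; apply/negP => z_viol.
have fy := f_dom_fin f_neqNy y_dom; set g0 := fine (f y) in fy.
have z_dom : domR f z by apply: lt_trans z_viol _; rewrite fy -EFinD ltry.
have fz := f_dom_fin f_neqNy z_dom; set gz := fine (f z) in fz.
pose q := (gz - p / 2 * l1norm (z - y))%R.
have q_lt : (q < g0)%R by move: z_viol; rewrite {1}fz {1}fy -EFinD lte_fin /q; lra.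
pose S := [set w | f w <= (q + p / 2 * l1norm (w - y))%:E].
have Sz : S z by rewrite /S /= /q {1}fz lee_fin; lra.
have [w Sw w_min] := exists_l1norm_closest y
  (compact_sublevel_l1 (y := y) (q := q) (a := p / 2)) (ex_intro _ z Sz).
have w_dom : domR f w by apply: le_lt_trans Sw (ltry _).
have w_neq_y : w != y.
  by apply/eqP => wy; move: Sw; rewrite /S /= wy subrr l1norm0 fy lee_fin; lra.
have [s [t [st ys_lt wt_lt [e0 e0_gt0 exch]]]] := exchange_toward w_dom y_dom w_neq_y.
have [e1 e1_gt0 slope_st] := fder_ge_slope f_neqNy f_epi y_dom (y_ge s t).
pose eta := Num.min (Num.min e0 e1) (Num.min (w ord0 s - y ord0 s) (y ord0 t - w ord0 t))%R.
have eta_gt0 : (0 < eta)%R by rewrite !lt_min e0_gt0 e1_gt0 !subr_gt0 ys_lt wt_lt.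
have [le_e0 le_e1 le_s le_t] : [/\ (eta <= e0)%R, (eta <= e1)%R,
    (eta <= w ord0 s - y ord0 s)%R & (eta <= y ord0 t - w ord0 t)%R].
  by rewrite /eta !ge_min !lexx ?orbT.
have exch_eta := exch eta; rewrite (ltW eta_gt0) le_e0 in exch_eta.
have slope_eta := slope_st eta; rewrite (ltW eta_gt0) le_e1 fy -EFinD in slope_eta.
have fwy : f w + f y <= ((q + p / 2 * l1norm (w - y)) + g0)%:E.
  by rewrite EFinD fy; apply: leeD.
have Sw' := lee_subr_of_leD (f_neqNy _) (f_neqNy _)
  (le_trans (exch_eta isT) fwy) (slope_eta isT).
have l1_closer : l1norm (w - eta *: dir R s t - y) = (l1norm (w - y) - 2 * eta)%R.
  by rewrite addrAC; apply: l1norm_sub_dir; rewrite ?mxE //; [exact: ltW|lra].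
have := w_min (w - eta *: dir R s t)%R; rewrite /S /= l1_closer.
rewrite (_ : q + p / 2 * (l1norm (w - y) - 2 * eta) = q + p / 2 * l1norm (w - y) - p * eta)%R;
  last by field.
by move=> /(_ Sw'); lra.
Qed.

Variable p : R.
Hypothesis p_lt0 : (p < 0)%R.

Lemma fder_ge_cone y z (K : R) : domR f y -> fder_ge p y ->
  (l1norm (z - y) <= 2 * K)%R -> f y + (p * K)%:E <= f z.
Proof.
move=> y_dom y_ge zK; apply: le_trans (fder_ge_global y_dom y_ge z).
rewrite (f_dom_fin f_neqNy y_dom) -!EFinD lee_fin.
have : (p * (2 * K - l1norm (z - y)) <= 0)%R.
  by apply: mulr_le0_ge0; [exact: ltW|rewrite subr_ge0].
lra.
Qed.

Lemma fder_eq_of_tight_exchange y z s t (K e0 : R) : domR f y -> fder_ge p y ->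
  f z = f y + (p * K)%:E -> (l1norm (z - y) <= 2 * K)%R -> s != t ->
  (0 < (z - y) ord0 s)%R -> ((z - y) ord0 t < 0)%R -> (0 < e0)%R ->
  (forall eta, (0 <= eta <= e0)%R ->
     f (y + eta *: dir R s t) + f (z - eta *: dir R s t) <= f y + f z) ->
  fder f y s t = p%:E.
Proof.
move=> y_dom y_ge fz zK st zs_gt0 zt_lt0 e0_gt0 exch.
have fy := f_dom_fin f_neqNy y_dom; set g0 := fine (f y) in fy.
rewrite fy -EFinD in fz.
have [e1 e1_gt0 slope_st] := fder_ge_slope f_neqNy f_epi y_dom (y_ge s t).
pose e := Num.min (Num.min e0 e1) (Num.min ((z - y) ord0 s) (- (z - y) ord0 t))%R.
have e_gt0 : (0 < e)%R by rewrite !lt_min e0_gt0 e1_gt0 zs_gt0 oppr_gt0 zt_lt0.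
apply: (fder_of_affine f_neqNy y_dom e_gt0) => eta /andP[eta_gt0 eta_le].
have [le_e0 le_e1 le_s le_t] : [/\ (eta <= e0)%R, (eta <= e1)%R,
    (eta <= (z - y) ord0 s)%R & (eta <= - (z - y) ord0 t)%R].
  by split; apply: le_trans eta_le _; rewrite /e !ge_min !lexx ?orbT.
apply/le_anti; rewrite slope_st ?(ltW eta_gt0) ?le_e1 // andbT.
have := exch eta; rewrite (ltW eta_gt0) le_e0 fy fz -EFinD => /(_ isT) exch_eta.
have cone : f y + (p * (K - eta))%:E <= f (z - eta *: dir R s t).
  apply: fder_ge_cone => //; rewrite addrAC l1norm_sub_dir //; [lra|exact: ltW|lra].
rewrite fy -EFinD (_ : g0 + p * (K - eta) = g0 + p * K + - (p * eta))%R in cone;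
  last by ring.
have := lee_subr_of_leD (f_neqNy _) (f_neqNy _) exch_eta cone.
by rewrite opprK.
Qed.

(** * One exchange step of PM-IncSlope *)

Section Step.
Variables (y : 'rV[R]_n) (i j : 'I_n).
Hypotheses (y_dom : domR f y) (y_ge : fder_ge p y) (ij : i != j).
Hypothesis fder_ij : fder f y i j = p%:E.

Let segment := [set lam : R | (0 <= lam)%R /\
  f (y + lam *: dir R i j) - f y = (lam * fine (fder f y i j))%:E].

Lemma segmentP lam : segment lam <->
  (0 <= lam)%R /\ f (y + lam *: dir R i j) = f y + (lam * p)%:E.
Proof.
rewrite /segment /= fder_ij /= (f_dom_fin f_neqNy y_dom) -EFinD.
by split=> -[lam_ge0 h]; split=> //; apply/sube_eq_EFin.
Qed.

Lemma segment0 : segment 0%R.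
Proof. by apply/segmentP; rewrite scale0r addr0 mul0r adde0. Qed.

Lemma segment_ubound : has_ubound segment.
Proof.
exists (M - y ord0 i)%R => lam /segmentP [lam_ge0 f_lam].
have : domR f (y + lam *: dir R i j)%R.
  by rewrite /domR /= f_lam (f_dom_fin f_neqNy y_dom) -EFinD ltry.
move=> /dom_bounded /(_ i); rewrite !mxE /= eqxx (negbTE ij) subr0 mulr1 => h.
by have := ler_norm (y ord0 i + lam)%R; lra.
Qed.

Lemma cbar_ge0 : (0 <= cbar f y i j)%R.
Proof. exact: (ub_le_sup segment_ubound segment0). Qed.

Lemma f_cbar : f (y + cbar f y i j *: dir R i j) = f y + (cbar f y i j * p)%:E.
Proof.
have fy := f_dom_fin f_neqNy y_dom; apply/le_anti/andP; split.
  rewrite fy -EFinD; apply: (f_le_line_sup f_epi segment0 segment_ubound).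
  by move=> lam /segmentP [_ ->]; rewrite fy -EFinD.
rewrite mulrC; apply: fder_ge_cone => //; rewrite addrKl.
by have := l1norm_dirZ (cbar f y i j) i j; rewrite ger0_norm // cbar_ge0.
Qed.

Let y' := (y + cbar f y i j *: dir R i j)%R.

Lemma dom_cbar : domR f y'.
Proof. by rewrite /domR /= f_cbar (f_dom_fin f_neqNy y_dom) -EFinD ltry. Qed.

(* A steeper direction at y' would take f below the cone bound at y. *)
Lemma fder_ge_cbar : fder_ge p y'.
Proof.
move=> k l; rewrite leNgt; apply/negP => /(fder_lt_slope f_neqNy f_epi dom_cbar).
move=> [e e_gt0]; apply/negP; rewrite -leNgt /y' f_cbar -addeA -EFinD.
rewrite (_ : cbar f y i j * p + p * e = p * (cbar f y i j + e))%R; last by ring.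
apply: fder_ge_cone => //; rewrite -[(y + _ + _)%R]addrA addrKl.
apply: le_trans (l1norm_dirZ2 _ _ _ _ _ _) _.
by rewrite !ger0_norm ?cbar_ge0 ?(ltW e_gt0) //; lra.
Qed.

(* Maximality of [cbar]. *)
Lemma fder_cbar_neq : fder f y' i j != p%:E.
Proof.
apply/negP => /eqP /(fder_fin_affine f_neqNy f_epi dom_cbar) [e e_gt0 f_aff].
have : segment (cbar f y i j + e)%R.
  apply/segmentP; split; first by have := cbar_ge0; lra.
  rewrite scalerDl addrA f_aff ?(ltW e_gt0) ?lexx // f_cbar -addeA -EFinD.
  by congr (_ + _%:E); ring.
by move=> /(ub_le_sup segment_ubound); rewrite -/(cbar f y i j); lra.
Qed.

Section NewArc.
Variables (k l : 'I_n) (e : R).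
Hypothesis kl : k != l.
Hypothesis e_gt0 : (0 < e)%R.
Hypothesis e_le : (e <= cbar f y i j)%R.
Hypothesis f_kl : f (y' + e *: dir R k l) = f y' + (p * e)%:E.

Let z := (y' + e *: dir R k l)%R.

Lemma sub_arc : (z - y = cbar f y i j *: dir R i j + e *: dir R k l)%R.
Proof. by rewrite /z /y' -[(y + _ + _)%R]addrA addrKl. Qed.

Lemma f_arc : f z = f y + (p * (cbar f y i j + e))%:E.
Proof. by rewrite /z f_kl f_cbar -addeA -EFinD; congr (_ + _%:E); ring. Qed.

Lemma l1norm_arc_le : (l1norm (z - y) <= 2 * (cbar f y i j + e))%R.
Proof.
rewrite sub_arc; apply: le_trans (l1norm_dirZ2 _ _ _ _ _ _) _.
by rewrite !ger0_norm ?cbar_ge0 ?(ltW e_gt0) //; lra.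
Qed.

Lemma arc_not_chained : k != j /\ l != i.
Proof.
have tight : (2 * (cbar f y i j + e) <= l1norm (z - y))%R.
  have := fder_ge_global y_dom y_ge z; rewrite f_arc (f_dom_fin f_neqNy y_dom) -!EFinD.
  by rewrite lee_fin => h; rewrite -(ler_nM2l p_lt0); lra.
have e_range : (0 <= e <= cbar f y i j)%R by rewrite (ltW e_gt0) e_le.
rewrite sub_arc in tight; split; apply/eqP => chained.
  have : (2 * (cbar f y i j + e) <= 2 * cbar f y i j)%R :=
    le_trans tight (l1norm_dirZ2_chain (i := i) (l := l) e_range (or_introl chained)).
  by rewrite ler_pM2l // gerDl leNgt e_gt0.
have : (2 * (cbar f y i j + e) <= 2 * cbar f y i j)%R :=
  le_trans tight (l1norm_dirZ2_chain (j := j) (k := k) e_range (or_intror chained)).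
by rewrite ler_pM2l // gerDl leNgt e_gt0.
Qed.

Lemma arc_coordE r : ((z - y) ord0 r = cbar f y i j * ((r == i)%:R - (r == j)%:R)
                                     + e * ((r == k)%:R - (r == l)%:R))%R.
Proof. by rewrite sub_arc !mxE. Qed.

Lemma arc_coord_gt0 : (0 < (z - y) ord0 k)%R.
Proof.
have [kj _] := arc_not_chained.
rewrite arc_coordE eqxx (negbTE kj) (negbTE kl) !subr0 mulr1.
by rewrite ltr_wpDl // mulr_ge0 ?cbar_ge0.
Qed.

Lemma arc_coord_lt0 : ((z - y) ord0 l < 0)%R.
Proof.
have [_ li] := arc_not_chained.
rewrite arc_coordE (negbTE li) (eq_sym l k) (negbTE kl) eqxx !sub0r !mulrN mulr1.
by rewrite -opprD oppr_lt0 ltr_wpDl // mulr_ge0 ?cbar_ge0.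
Qed.

Lemma arc_coord_negP t : ((z - y) ord0 t < 0)%R -> (t == j) || (t == l).
Proof.
apply: contraLR; rewrite negb_or -leNgt => /andP[tj tl].
by rewrite arc_coordE (negbTE tj) (negbTE tl) !subr0 addr_ge0 // mulr_ge0 ?cbar_ge0 // ltW.
Qed.

Lemma arc_coord_posP s : (0 < (z - y) ord0 s)%R -> (s == i) || (s == k).
Proof.
apply: contraLR; rewrite negb_or -leNgt => /andP[si sk].
rewrite arc_coordE (negbTE si) (negbTE sk) !sub0r !mulrN -opprD oppr_le0.
by rewrite addr_ge0 // mulr_ge0 ?cbar_ge0 // ltW.
Qed.

Lemma arc_from_exchange : fder f y k l = p%:E \/ (k != i /\ fder f y k j = p%:E).
Proof.
have z_dom : domR f z by rewrite /domR /= f_arc (f_dom_fin f_neqNy y_dom) -EFinD ltry.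
have tight_arc := fder_eq_of_tight_exchange y_dom y_ge f_arc l1norm_arc_le.
have [ki|ki] := eqVneq k i.
  left; rewrite ki; have zl_lt : (z ord0 l < y ord0 l)%R.
    by move: arc_coord_lt0; rewrite coordB; lra.
  have [s [ys_lt [e0 [e0_gt0 exch]]]] := f_exchange y_dom z_dom zl_lt.
  have zs_gt0 : (0 < (z - y) ord0 s)%R by rewrite coordB; lra.
  have si : s = i by have := arc_coord_posP zs_gt0; rewrite ki orbb => /eqP.
  rewrite si in exch zs_gt0; apply: (tight_arc _ _ e0) => //.
  - by have [_ li] := arc_not_chained; rewrite eq_sym.
  - exact: arc_coord_lt0.
  - by move=> eta /exch; rewrite dirNC !scalerN opprK.
have yk_lt : (y ord0 k < z ord0 k)%R by move: arc_coord_gt0; rewrite coordB; lra.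
have [t [zt_lt [e0 [e0_gt0 exch]]]] := f_exchange z_dom y_dom yk_lt.
have zt_lt0 : ((z - y) ord0 t < 0)%R by rewrite coordB; lra.
have kt : k != t by apply/eqP => kt; move: arc_coord_gt0 zt_lt0; rewrite kt; lra.
have fder_kt : fder f y k t = p%:E.
  apply: (tight_arc _ _ e0) => //; first exact: arc_coord_gt0.
  by move=> eta /exch; rewrite addeC [X in _ <= X]addeC.
by case/orP: (arc_coord_negP zt_lt0) => /eqP tE; rewrite tE in fder_kt; [right|left].
Qed.

End NewArc.

Lemma fder_cbar_arc k l : fder f y' k l = p%:E ->
  fder f y k l = p%:E \/ (k != i /\ fder f y k j = p%:E).
Proof.
move=> fder_kl; have [cbar0|cbar_neq0] := eqVneq (cbar f y i j) 0%R.
  by left; move: fder_kl; rewrite /y' cbar0 scale0r addr0.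
have cbar_gt0 : (0 < cbar f y i j)%R by rewrite lt_neqAle eq_sym cbar_neq0 cbar_ge0.
have [kl|kl] := eqVneq k l.
  move: fder_kl; rewrite kl (fder_diag f_neqNy l dom_cbar) => /eqP.
  by rewrite eqe eq_sym lt_eqF.
have [e1 e1_gt0 f_aff] := fder_fin_affine f_neqNy f_epi dom_cbar fder_kl.
pose e := Num.min e1 (cbar f y i j).
have e_gt0 : (0 < e)%R by rewrite lt_min e1_gt0 cbar_gt0.
apply: (arc_from_exchange kl e_gt0); first by rewrite ge_min lexx orbT.
by apply: f_aff; rewrite (ltW e_gt0) ge_min lexx.
Qed.

End Step.

Lemma inc_step_inv y i j : domR f y -> fder_ge p y ->
  [/\ domR f (inc_step f p%:E y i j), fder_ge p (inc_step f p%:E y i j),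
      fder f (inc_step f p%:E y i j) i j != p%:E &
      forall k l, fder f (inc_step f p%:E y i j) k l = p%:E ->
        fder f y k l = p%:E \/ (k != i /\ fder f y k j = p%:E)].
Proof.
move=> y_dom y_ge; rewrite /inc_step; case: ifP => [/andP[ji /eqP fder_ij]|no_step].
  have ij : i != j by rewrite eq_sym.
  split; [exact: dom_cbar|exact: fder_ge_cbar|exact: fder_cbar_neq|exact: fder_cbar_arc].
split=> //; last by move=> k l ->; left.
have [->|ji] := eqVneq j i; last by move: no_step; rewrite ji /= => /negbT.
by rewrite (fder_diag f_neqNy i y_dom) eq_sym eqe lt_eqF.
Qed.

Definition no_arc_from y k := forall l, fder f y k l != p%:E.

Lemma inner_loop_inv i (g : 'I_n -> 'I_n) (ls : seq 'I_n) y :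
  domR f y -> fder_ge p y ->
  let y' := foldl (fun z l => inc_step f p%:E z i (g l)) y ls in
  [/\ domR f y', fder_ge p y', (forall k, no_arc_from y k -> no_arc_from y' k) &
      forall l, fder f y' i l = p%:E -> fder f y i l = p%:E /\ l \notin map g ls].
Proof.
elim: ls y => [|a ls IH] y y_dom y_ge /=; first by split=> // l ->.
have [y1_dom y1_ge y1_neq y1_arc] := inc_step_inv i (g a) y_dom y_ge.
have [y'_dom y'_ge y'_no_arc y'_arc] := IH _ y1_dom y1_ge.
split=> // [k no_arc_k|l /y'_arc [fder_il l_notin]].
  apply: y'_no_arc => l; apply/negP => /eqP /y1_arc [h|[_ h]].
    by move: (no_arc_k l); rewrite h eqxx.
  by move: (no_arc_k (g a)); rewrite h eqxx.
have [h|[]] := y1_arc _ _ fder_il; last by rewrite eqxx.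
split=> //; rewrite in_cons negb_or l_notin andbT; apply/eqP => la.
by move: fder_il y1_neq; rewrite la => ->; rewrite eqxx.
Qed.

Lemma outer_loop_inv (sigma : {perm 'I_n}) (tau : 'I_n -> {perm 'I_n}) (ks : seq 'I_n) y :
  domR f y -> fder_ge p y ->
  let y' := foldl (fun w k => let i := sigma k in
       foldl (fun z l => inc_step f p%:E z i (tau i l)) w (enum 'I_n)) y ks in
  [/\ domR f y', fder_ge p y' &
      forall r, no_arc_from y r \/ r \in map sigma ks -> no_arc_from y' r].
Proof.
elim: ks y => [|a ks IH] y y_dom y_ge /=; first by split=> // r [|].
have [y1_dom y1_ge y1_no_arc y1_arc] :=
  inner_loop_inv (sigma a) (tau (sigma a)) (enum 'I_n) y_dom y_ge.
have [y'_dom y'_ge y'_no_arc] := IH _ y1_dom y1_ge.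
split=> // r r_done; apply: y'_no_arc.
case: r_done => [no_arc_r|]; first by left; apply: y1_no_arc.
rewrite in_cons => /orP[/eqP ->|]; last by right.
left => l; apply/negP => /eqP /y1_arc [_]; apply/negP/negPn/mapP.
by exists ((tau (sigma a))^-1 l)%g; rewrite ?mem_enum ?permKV.
Qed.

End MConvex.

Section PhiR.
Variables (R : realType) (n : nat) (f : 'rV[R]_n -> \bar R) (y : 'rV[R]_n).

Lemma phiR_le_fder i j : phiR f y <= fder f y i j.
Proof. by apply: le_trans (bigmin_le _ i _) _; exact: bigmin_le. Qed.

Lemma phiR_gt (a : \bar R) : a < +oo -> (forall i j, a < fder f y i j) -> a < phiR f y.
Proof.
move=> a_lt fder_gt; apply: (big_ind (fun v => a < v)) => // [u v|i _].
  by rewrite lt_min => ->.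
by apply: (big_ind (fun v => a < v)) => // u v; rewrite lt_min => ->.
Qed.

Lemma phiR_neqNy : (forall i j, fder f y i j != -oo) -> phiR f y != -oo.
Proof.
have min_neqNy (u v : \bar R) : u != -oo -> v != -oo -> Order.min u v != -oo.
  by rewrite /Order.min; case: ifP.
move=> fder_neq; apply: (big_ind (fun v => v != -oo)) => // i _.
exact: (big_ind (fun v => v != -oo)).
Qed.

End PhiR.

Theorem mainTheorem17 (R : realType) (n : nat) (f : 'rV[R]_n -> \bar R)
  (x : 'rV[R]_n) (sigma : {perm 'I_n}) (tau : 'I_n -> {perm 'I_n}) :
  M_convex f ->
  (exists M : R, forall y, domR f y -> forall i, (`|y ord0 i| <= M)%R) ->
  domR f x ->
  phiR f x < 0 ->
  phiR f x < phiR f (PM_IncSlope f sigma tau x).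
Proof.
move=> [[f_neqNy [_ [m [A [b [c f_epi]]]]]] f_exchange] [M dom_bounded] x_dom phi_lt0.
have phi_fin : phiR f x \is a fin_num.
  rewrite fin_numE (lt_eqF (lt_trans phi_lt0 (ltry 0%R))) andbT.
  by apply: phiR_neqNy => i j; apply: (fder_neqNy f_neqNy f_epi).
set p := fine (phiR f x); have phi_p : phiR f x = p%:E by rewrite /p (fineK phi_fin).
have p_lt0 : (p < 0)%R by rewrite -lte_fin -phi_p.
have x_ge : fder_ge f p x by move=> i j; rewrite -phi_p phiR_le_fder.
have [_ y_ge no_arc] := outer_loop_inv f_neqNy f_epi f_exchange dom_bounded p_lt0
  sigma tau (enum 'I_n) x_dom x_ge.
rewrite /PM_IncSlope phi_p; apply: phiR_gt; first exact: ltry.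
move=> i j; rewrite lt_neqAle y_ge andbT eq_sym; apply: (no_arc i); right.
by apply/mapP; exists (sigma^-1 i)%g; rewrite ?mem_enum ?permKV.
Qed.
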